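(* For every integer $n\ge0$ and real $x$, $$\mathfrak{C}_{n+1}(x)=x\sum_{k=0}^{\lfloor n/2\rfloor}4^{-k}\binom{n+1}{2k+1}\mathfrak{C}_{n-2k}(x).$$
   Context: For $n\ge1$ the central factorial is $x^{[n]}=x\,(x+\tfrac n2-1)(x+\tfrac n2-2)\cdots(x-\tfrac n2+1)$ (a product of $n$ factors), and $x^{[0]}=1$. The central factorial numbers of the second kind $T(n,k)$ ($0\le k\le n$) are defined by $x^n=\sum_{k=0}^n T(n,k)\,x^{[k]}$; equivalently $T(n,k)=\frac1{k!}\sum_{j=0}^k(-1)^j\binom kj\left(\frac k2-j\right)^n$, and $T(n,k)=0$ for $k>n$. The $n$th central Fubini-like polynomial is $\mathfrak{C}_n(x)=\sum_{k=0}^n k!\,T(n,k)\,x^k$. *)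

From HB Require Import structures.
From mathcomp Require Import all_boot all_order all_algebra.
Set Implicit Arguments. Unset Strict Implicit. Unset Printing Implicit Defensive.
Import Order.TTheory GRing.Theory Num.Theory.
Local Open Scope ring_scope.

(* Central factorial numbers of the second kind:
   T(n,k) = 1/k! * sum_{j=0}^k (-1)^j C(k,j) (k/2 - j)^n. *)
Definition cfT (R : realFieldType) (n k : nat) : R :=
  (k`!%:R)^-1 * \sum_(j < k.+1)
     (-1) ^+ j * ('C(k, j))%:R * (k%:R / 2 - j%:R) ^+ n.

(* Central Fubini-like polynomial C_n(x) = sum_{k=0}^n k! T(n,k) x^k. *)
Definition cfub (R : realFieldType) (n : nat) (x : R) : R :=
  \sum_(k < n.+1) (k`!)%:R * cfT R n k * x ^+ k.
Arguments cfT : clear implicits.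
Arguments cfub : clear implicits.

(** k! T(n,k) is the value at 0 of the k-th central difference of y^n, where
    the central difference is d f (y) = f (y + 1/2) - f (y - 1/2).  By the
    binomial theorem only odd powers of 1/2 survive in d (y^(n+1)), giving
    d (y^(n+1)) = sum_k 4^-k C(n+1,2k+1) y^(n-2k); applying the remaining m
    differences, which are linear, yields a recurrence for (m+1)! T(n+1,m+1)
    that sums to the stated recurrence for the central Fubini-like
    polynomials. *)
From HB Require Import structures.
From mathcomp Require Import all_boot all_order all_algebra.
From mathcomp Require Import ring zify.
Set Implicit Arguments. Unset Strict Implicit. Unset Printing Implicit Defensive.
Import Order.TTheory GRing.Theory Num.Theory.
Local Open Scope ring_scope.

Lemma sum_ord_double (V : nmodType) (F : nat -> V) K :
  \sum_(i < (2 * K)%N) F i = \sum_(k < K) (F (2 * k)%N + F (2 * k).+1).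
Proof.
elim: K => [|K IH]; first by rewrite !big_ord0.
by rewrite mulnS !big_ord_recr /= IH addrA.
Qed.

Lemma sum_ord_zero_tail (V : nmodType) (F : nat -> V) N M :
    (N <= M)%N -> (forall i, (N <= i)%N -> F i = 0) ->
  \sum_(i < M) F i = \sum_(i < N) F i.
Proof.
move=> le_NM F_tail; rewrite -!(big_mkord xpredT) (@big_cat_nat _ _ _ N 0 M _ _ (leq0n N) le_NM) /=.
by rewrite [X in _ + X]big_nat_cond [X in _ + X]big1 ?addr0 // => i /andP[/andP[/F_tail]].
Qed.

Section CentralDifference.
Variable R : numFieldType.

Definition central_diff (f : R -> R) (y : R) : R := f (y + 1 / 2) - f (y - 1 / 2).

(* The value at 0 of the m-th iterate of [central_diff]. *)
Definition central_diff0 (m : nat) (f : R -> R) : R :=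
  \sum_(j < m.+1) (-1) ^+ j * ('C(m, j))%:R * f (m%:R / 2 - j%:R).

Lemma eq_central_diff0 m f g : f =1 g -> central_diff0 m f = central_diff0 m g.
Proof. by move=> fg; apply: eq_bigr => j _; rewrite fg. Qed.

Lemma central_diff0_sum m K (c : nat -> R) (h : nat -> R -> R) :
  central_diff0 m (fun y => \sum_(k < K) c k * h k y) =
  \sum_(k < K) c k * central_diff0 m (h k).
Proof.
under eq_bigr do rewrite mulr_sumr.
rewrite exchange_big; apply: eq_bigr => k _; rewrite mulr_sumr.
by apply: eq_bigr => j _; ring.
Qed.

Lemma central_diff0S m f :
  central_diff0 m.+1 f = central_diff0 m (central_diff f).
Proof.
set g := fun j : nat => f (m.+1%:R / 2 - j%:R).
set G := fun j : nat => (-1) ^+ j * ('C(m, j))%:R * g j.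
have G_last : \sum_(j < m.+2) G j = \sum_(j < m.+1) G j.
  by rewrite big_ord_recr /= /G bin_small // mulr0 mul0r addr0.
(* Pascal's rule splits the sum into two shifted copies of [G]. *)
have pascal : central_diff0 m.+1 f =
    \sum_(j < m.+2) G j - \sum_(j < m.+1) (-1) ^+ j * ('C(m, j))%:R * g j.+1.
  rewrite /central_diff0 big_ord_recl [X in _ = X - _]big_ord_recl -addrA -sumrB.
  congr (_ + _); first by rewrite /G /g !bin0 subr0.
  by apply: eq_bigr => j _; rewrite binS natrD /G /g exprS /=; ring.
rewrite pascal G_last -sumrB; apply: eq_bigr => j _.
rewrite /central_diff /G /g -mulrBr; congr (_ * (f _ - f _)).
- by rewrite -[m.+1%:R]natr1; field.
- by rewrite -[m.+1%:R]natr1 -[j.+1%:R]natr1; field.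
Qed.

Lemma central_diff0S_const m c : central_diff0 m.+1 (fun=> c) = 0.
Proof.
rewrite central_diff0S (@eq_central_diff0 _ _ (fun=> 0)) => [|y]; last exact: subrr.
by apply: big1 => j _; rewrite mulr0.
Qed.

Lemma central_diff_exprS n (y : R) :
  central_diff (fun z => z ^+ n.+1) y =
  \sum_(k < (n./2).+1) ((4 : R) ^+ k)^-1 * ('C(n.+1, (2 * k).+1))%:R * y ^+ (n - 2 * k).
Proof.
set F := fun i : nat =>
  ('C(n.+1, i))%:R * y ^+ (n.+1 - i) * ((1 / 2 : R) ^+ i - (- (1 / 2)) ^+ i).
have sign_even k : (-1 : R) ^+ (2 * k) = 1 by rewrite -signr_odd oddM.
have F_even k : F (2 * k)%N = 0 by rewrite /F exprNn sign_even; ring.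
have F_large i : (n.+1 < i)%N -> F i = 0 by move=> lt_ni; rewrite /F bin_small ?mul0r.
have halves : (n.+1 <= 2 * (n./2).+1 <= n.+3)%N.
  have := odd_double_half n; have := leq_b1 (odd n); rewrite -mul2n => ? ?.
  by apply/andP; split; lia.
have -> : central_diff (fun z => z ^+ n.+1) y = \sum_(i < n.+2) F i.
  rewrite /central_diff !exprDn -sumrB; apply: eq_bigr => i _.
  by rewrite /F -mulrnBl -mulrBr -mulr_natl; ring.
rewrite -(@sum_ord_zero_tail _ F n.+2 n.+3) // (@sum_ord_zero_tail _ F (2 * (n./2).+1)).
- rewrite sum_ord_double; apply: eq_bigr => k _.
  have quarter : (1 / 2 : R) ^+ 2 = 4^-1 by field.
  rewrite F_even add0r /F subSS exprNn !exprS sign_even exprM quarter exprVn.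
  by move: (('C(_, _))%:R : R) (y ^+ _) ((4 : R) ^+ k)^-1 => c u q; field.
- by case/andP: halves.
- move=> i le_i; case: (ltnP n.+1 i) => [/F_large //|le_in].
  by have -> : i = (2 * (n./2).+1)%N by case/andP: halves; lia.
Qed.

End CentralDifference.

Section ScaledCentralFactorial.
Variable R : realFieldType.

Definition cfT_fact (n m : nat) : R := central_diff0 m (fun y : R => y ^+ n).

Lemma cfT_factE n m : cfT_fact n m = m`!%:R * cfT R n m.
Proof. by rewrite /cfT mulrA mulfV ?mul1r // pnatr_eq0 -lt0n fact_gt0. Qed.

Lemma cfT_factSS n m : cfT_fact n.+1 m.+1 =
  \sum_(k < (n./2).+1) ((4 : R) ^+ k)^-1 * ('C(n.+1, (2 * k).+1))%:R * cfT_fact (n - 2 * k) m.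
Proof.
rewrite /cfT_fact central_diff0S (eq_central_diff0 _ (central_diff_exprS n)).
exact: (central_diff0_sum m (n./2).+1
  (fun k => ((4 : R) ^+ k)^-1 * ('C(n.+1, (2 * k).+1))%:R) (fun k y => y ^+ (n - 2 * k))).
Qed.

Lemma cfT_factS0 n : cfT_fact n.+1 0 = 0.
Proof. by rewrite /cfT_fact /central_diff0 big_ord1 mul1r mul0r subr0 expr0n mulr0. Qed.

Lemma cfT_fact_small n m : (n < m)%N -> cfT_fact n m = 0.
Proof.
elim: m n => [|m IH] [|n] //= lt_nm; first exact: central_diff0S_const.
rewrite cfT_factSS big1 // => k _; rewrite IH ?mulr0 //.
exact: leq_ltn_trans (leq_subr _ _) _.
Qed.

Lemma cfubE n x : cfub R n x = \sum_(k < n.+1) cfT_fact n k * x ^+ k.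
Proof. by apply: eq_bigr => k _; rewrite cfT_factE. Qed.

Lemma cfub_widen n N x : (n <= N)%N ->
  cfub R n x = \sum_(k < N.+1) cfT_fact n k * x ^+ k.
Proof.
move=> le_nN; rewrite cfubE (@sum_ord_zero_tail _ (fun k => cfT_fact n k * x ^+ k) n.+1 N.+1) //.
by move=> k lt_nk; rewrite cfT_fact_small ?mul0r.
Qed.

End ScaledCentralFactorial.

Theorem theorem11 (R : realFieldType) (n : nat) (x : R) :
  cfub R n.+1 x =
  x * \sum_(k < (n./2).+1)
        ((4 : R) ^+ k)^-1 * ('C(n.+1, (2 * k).+1))%:R * cfub R (n - 2 * k)%N x.
Proof.
rewrite cfubE big_ord_recl cfT_factS0 mul0r add0r.
under [X in _ = x * X]eq_bigr => k _ do rewrite (@cfub_widen _ _ n) ?leq_subr // mulr_sumr.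
rewrite exchange_big mulr_sumr; apply: eq_bigr => i _.
rewrite lift0 cfT_factSS exprS mulr_suml mulr_sumr.
by apply: eq_bigr => k _; ring.
Qed.
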